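(* Let $k\ne\ell$ in $\{1,\dots,r\}$, and assume all indices appearing below (as subscripts, including those needed to define the coefficients) lie in $\mathfrak C_{2r}$ and are normal. Then (1) $\alpha_{\bm n;\bm m}\beta_{\bm n;\bm m}+\sum_{j=1}^r\rho_{\bm n;\bm m,j}=1$; (2) $\alpha_{\bm n+\bm e_k;\bm m}-\alpha_{\bm n+\bm e_\ell;\bm m}=\alpha_{\bm n;\bm m}\gamma^{k\ell}_{\bm n;\bm m}$; (3) $\beta_{\bm n+\bm e_\ell;\bm m}-\beta_{\bm n+\bm e_k;\bm m}=\beta_{\bm n+\bm e_\ell+\bm e_k;\bm m}\gamma^{k\ell}_{\bm n;\bm m}$; (4) $\rho_{\bm n;\bm m,k}\gamma^{k\ell}_{\bm n;\bm m}=\rho_{\bm n+\bm e_\ell;\bm m,k}\gamma^{k\ell}_{\bm n-\bm e_k;\bm m}$; and similarly (1') $\alpha_{\bm n;\bm m}\beta_{\bm n;\bm m}+\sum_{j=1}^r\sigma_{\bm n;\bm m,j}=1$; (2') $\alpha_{\bm n;\bm m+\bm e_\ell}-\alpha_{\bm n;\bm m+\bm e_k}=\alpha_{\bm n;\bm m+\bm e_\ell+\bm e_k}\eta^{k\ell}_{\bm n;\bm m}$; (3') $\beta_{\bm n;\bm m+\bm e_k}-\beta_{\bm n;\bm m+\bm e_\ell}=\beta_{\bm n;\bm m}\eta^{k\ell}_{\bm n;\bm m}$; (4') $\sigma_{\bm n;\bm m,k}\eta^{k\ell}_{\bm n;\bm m}=\sigma_{\bm n;\bm m+\bm e_\ell,k}\eta^{k\ell}_{\bm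 n;\bm m-\bm e_k}$. (In (1) the normality requirement concerns $(\bm n;\bm m)$ and every $(\bm n-\bm e_j;\bm m)$ lying in $\mathfrak C_{2r}$; in (1') it concerns $(\bm n;\bm m)$ and every $(\bm n;\bm m-\bm e_j)$ lying in $\mathfrak C_{2r}$.)
   Context: Fix $r\ge1$; $\bm e_j$ is the $j$-th standard unit vector of $\mathbb Z^r$; for $\bm v\in\mathbb Z^r$, $|\bm v|=v_1+\dots+v_r$ (signed). Let $c_{k,j}\in\mathbb C$ and $L_j$ the linear functional on complex Laurent polynomials with $L_j[w^{-k}]=c_{k,j}$ ($k\in\mathbb Z$, $1\le j\le r$). $\mathfrak C_{2r}=\{(\bm n;\bm m)\in\mathbb Z^r\times\mathbb Z^r:n_j+m_j\ge0\ \forall j\}$. For $(\bm n;\bm m)\in\mathfrak C_{2r}$, $\bm n\ne-\bm m$, $T_{\bm n;\bm m}$ is the square matrix of size $|\bm n|+|\bm m|$ with rows indexed by $(j,k)$, $1\le j\le r$, $-m_j\le k\le n_j-1$ (ordered by $j$, then increasing $k$), columns indexed by $i=-|\bm m|,\dots,|\bm n|-1$, entries $c_{k-i,j}$; $T_{\bm n;-\bm n}:=1$; normal means $\det T_{\bm n;\bm m}\ne0$. For normal $(\bm n;\bm m)$, $\bm n\ne-\bm m$: $\Phi_{\bm n;\bm m}$ is the unique Laurent polynomial in $\operatorname{span}\{z^k\}_{k=-|\bm m|}^{|\bm n|}$ with $z^{|\bm n|}$-coefficient $1$ and $L_j[\Phi_{\bm n;\bm m}(w)w^{-k}]=0$ for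 $-m_j\le k\le n_j-1$, all $j$; $\Phi^*_{\bm n;\bm m}$ is the unique one in that span with $z^{-|\bm m|}$-coefficient $1$ and $L_j[\Phi^*_{\bm n;\bm m}(w)w^{-k}]=0$ for $-m_j+1\le k\le n_j$; for $\bm n=-\bm m$, $\Phi=\Phi^*=1$. $\alpha_{\bm n;\bm m}$ := $z^{-|\bm m|}$-coefficient of $\Phi_{\bm n;\bm m}$, $\beta_{\bm n;\bm m}$ := $z^{|\bm n|}$-coefficient of $\Phi^*_{\bm n;\bm m}$. Recurrence coefficients: $\rho_{\bm n;\bm m,j}=L_j[\Phi_{\bm n;\bm m}(w)w^{-n_j}]/L_j[\Phi_{\bm n-\bm e_j;\bm m}(w)w^{-n_j+1}]$ if $(\bm n-\bm e_j;\bm m)\in\mathfrak C_{2r}$, and $\rho_{\bm n;\bm m,j}=0$ otherwise; $\sigma_{\bm n;\bm m,j}=L_j[\Phi^*_{\bm n;\bm m}(w)w^{m_j}]/L_j[\Phi^*_{\bm n;\bm m-\bm e_j}(w)w^{m_j-1}]$ if $(\bm n;\bm m-\bm e_j)\in\mathfrak C_{2r}$, and $0$ otherwise (these are the coefficients of the recurrences $\Phi_{\bm n;\bm m}(z)=\alpha_{\bm n;\bm m}\Phi^*_{\bm n;\bm m}(z)+\sum_j\rho_{\bm n;\bm m,j}z\Phi_{\bm n-\bm e_j;\bm m}(z)$ and $\Phi^*_{\bm n;\bm m}(z)=\beta_{\bm n;\bm m}\Phi_{\bm n;\bm m}(z)+\sum_j\sigma_{\bm n;\bm m,j}z^{-1}\Phi^*_{\bm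 n;\bm m-\bm e_j}(z)$). For $k\ne\ell$: $\gamma^{k\ell}_{\bm n;\bm m}=L_\ell[\Phi_{\bm n+\bm e_k;\bm m}(w)w^{-n_\ell}]/L_\ell[\Phi_{\bm n;\bm m}(w)w^{-n_\ell}]$, the number with $\Phi_{\bm n+\bm e_k;\bm m}-\Phi_{\bm n+\bm e_\ell;\bm m}=\gamma^{k\ell}_{\bm n;\bm m}\Phi_{\bm n;\bm m}$; $\eta^{k\ell}_{\bm n;\bm m}=L_\ell[\Phi^*_{\bm n;\bm m+\bm e_k}(w)w^{m_\ell}]/L_\ell[\Phi^*_{\bm n;\bm m}(w)w^{m_\ell}]$, the number with $\Phi^*_{\bm n;\bm m+\bm e_k}-\Phi^*_{\bm n;\bm m+\bm e_\ell}=\eta^{k\ell}_{\bm n;\bm m}\Phi^*_{\bm n;\bm m}$. *)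

From HB Require Import structures.
From mathcomp Require Import all_boot all_order all_algebra.
From mathcomp Require Import reals.
From mathcomp Require Import complex.
From Stdlib Require Import ClassicalEpsilon.
Set Implicit Arguments. Unset Strict Implicit. Unset Printing Implicit Defensive.
Import Order.TTheory GRing.Theory Num.Theory.
Local Open Scope ring_scope.

Section MOP.
Variable C : fieldType.
Variable r : nat.

Definition mi := 'I_r -> int.

Definition ev (j : 'I_r) : mi := fun i => (i == j)%:Z.
Definition vadd (v w : mi) : mi := fun i => v i + w i.
Definition vsub (v w : mi) : mi := fun i => v i - w i.
Definition vopp (v : mi) : mi := fun i => - v i.

Definition vnorm (v : mi) : int := \sum_(i < r) v i.

Definition inC2r (n m : mi) : bool := [forall j, 0 <= n j + m j].

Definition irange (lo hi : int) : seq int :=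
  [seq lo + (t%:Z) | t <- iota 0 (if lo <= hi then absz (hi - lo) else 0%N)].

(* c k j stands for c_{k,j} = L_j[w^{-k}] *)
Variable c : int -> 'I_r -> C.

(* A Laurent polynomial is represented as z^d * p(z) with d : int and
   p : {poly C}.  Lw j d p k = L_j[ w^d p(w) * w^{-k} ]
   = sum_i p_i L_j[w^{d+i-k}] = sum_i p_i c_{k-d-i,j}. *)
Definition Lw (j : 'I_r) (d : int) (p : {poly C}) (k : int) : C :=
  \sum_(i < size p) p`_i * c (k - d - (i%:Z)) j.

Definition dimT (n m : mi) : nat := absz (vnorm n + vnorm m).

Definition Trows (n m : mi) : seq ('I_r * int) :=
  flatten [seq [seq (j, k) | k <- irange (- m j) (n j)] | j <- enum 'I_r].

(* T_{n;m}: entry in row (j,k), column i (i = -|m|, ..., |n|-1) is c_{k-i,j} *)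
Definition Tmat (n m : mi) : 'M[C]_(dimT n m) :=
  \matrix_(a < dimT n m, b < dimT n m)
    nth 0 [seq c (rw.2 - (b%:Z - vnorm m)) rw.1 | rw <- Trows n m] a.

(* normality; T_{n;-n} := 1 *)
Definition normal (n m : mi) : Prop :=
  if [forall j, n j == - m j] then True else \det (Tmat n m) != 0.

(* Phi_{n;m} = z^{-|m|} p(z), deg p <= |n|+|m|, coefficient of z^{|n|}
   (i.e. p_{|n|+|m|}) equal to 1, and L_j[Phi w^{-k}] = 0, -m_j <= k <= n_j-1 *)
Definition isPhi (n m : mi) (p : {poly C}) : Prop :=
  (size p <= (dimT n m).+1)%N /\ p`_(dimT n m) = 1 /\
  forall j k, k \in irange (- m j) (n j) -> Lw j (- vnorm m) p k = 0.

(* Phi*_{n;m} = z^{-|m|} p(z), coefficient of z^{-|m|} (= p_0) equal to 1,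
   L_j[Phi* w^{-k}] = 0 for -m_j+1 <= k <= n_j *)
Definition isPhiS (n m : mi) (p : {poly C}) : Prop :=
  (size p <= (dimT n m).+1)%N /\ p`_0 = 1 /\
  forall j k, k \in irange (- m j + 1) (n j + 1) -> Lw j (- vnorm m) p k = 0.

(* "the unique" such polynomial (well defined for normal indices) *)
Definition Phi (n m : mi) : {poly C} :=
  epsilon (inhabits (0 : {poly C})) (isPhi n m).
Definition PhiS (n m : mi) : {poly C} :=
  epsilon (inhabits (0 : {poly C})) (isPhiS n m).

(* alpha: coefficient of z^{-|m|} in Phi; beta: coefficient of z^{|n|} in Phi* *)
Definition alpha (n m : mi) : C := (Phi n m)`_0.
Definition beta (n m : mi) : C := (PhiS n m)`_(dimT n m).

Definition rho (n m : mi) (j : 'I_r) : C :=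
  if inC2r (vsub n (ev j)) m then
    Lw j (- vnorm m) (Phi n m) (n j) /
    Lw j (- vnorm m) (Phi (vsub n (ev j)) m) (n j - 1)
  else 0.

Definition sigma (n m : mi) (j : 'I_r) : C :=
  if inC2r n (vsub m (ev j)) then
    Lw j (- vnorm m) (PhiS n m) (- m j) /
    Lw j (- vnorm (vsub m (ev j))) (PhiS n (vsub m (ev j))) (- (m j - 1))
  else 0.

Definition gamma (k l : 'I_r) (n m : mi) : C :=
  Lw l (- vnorm m) (Phi (vadd n (ev k)) m) (n l) /
  Lw l (- vnorm m) (Phi n m) (n l).

Definition etac (k l : 'I_r) (n m : mi) : C :=
  Lw l (- vnorm (vadd m (ev k))) (PhiS n (vadd m (ev k))) (- m l) /
  Lw l (- vnorm m) (PhiS n m) (- m l).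

Definition good (n m : mi) : Prop := inC2r n m /\ normal n m.

End MOP.

From HB Require Import structures.
From mathcomp Require Import all_boot all_order all_algebra.
From mathcomp Require Import reals complex zify.
From Stdlib Require Import ClassicalEpsilon FunctionalExtensionality.
Set Implicit Arguments. Unset Strict Implicit. Unset Printing Implicit Defensive.
Import Order.TTheory GRing.Theory Num.Theory.
Local Open Scope ring_scope.

(* For normal indices the orthogonality conditions defining Phi_{n;m} (resp. Phi*_{n;m}) are a
   uniquely solvable linear system with matrix T_{n;m}, so every polynomial of degree at most
   |n|+|m| satisfying them is a multiple of Phi_{n;m} (resp. Phi*_{n;m}), the factor being read
   off one coefficient.  Applied to combinations of neighbouring polynomials this gives
     Phi_{n+e_k} - Phi_{n+e_l} = gamma^{kl}_n Phi_n,
     Phi*_{n+e_j} = Phi*_n + beta_{n+e_j} z Phi_n,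
     Phi_n = alpha_n Phi*_n + sum_j rho_{n,j} z Phi_{n-e_j},
   and (1)-(4) follow by comparing one coefficient or one further moment.
   The substitution w -> 1/w, i.e. the moments c_{-k,j} with n and m exchanged, maps Phi*_{n;m}
   to Phi_{m;n} and Phi_{n;m} to Phi*_{m;n}; it exchanges alpha and beta and turns sigma, eta
   into rho, gamma, so (1'), (2'), (3'), (4') are (1), (3), (2), (4) for the reflected moments. *)

Section MultiIndices.
Variable r : nat.
Implicit Types (n m v w : mi r) (i j : 'I_r).

Lemma mi_ext v w : v =1 w -> v = w.
Proof. exact: functional_extensionality. Qed.

Lemma vaddE v i j : vadd v (ev j) i = v i + (i == j)%:Z.
Proof. by []. Qed.

Lemma vsubE v i j : vsub v (ev j) i = v i - (i == j)%:Z.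
Proof. by []. Qed.

Lemma vsubK v j : vadd (vsub v (ev j)) (ev j) = v.
Proof. by apply: mi_ext => i; rewrite /vadd /vsub subrK. Qed.

Lemma vsub_vadd v j l : vsub (vadd v (ev l)) (ev j) = vadd (vsub v (ev j)) (ev l).
Proof. by apply: mi_ext => i; rewrite /vadd /vsub addrAC. Qed.

Lemma vaddAC v j l : vadd (vadd v (ev j)) (ev l) = vadd (vadd v (ev l)) (ev j).
Proof. by apply: mi_ext => i; rewrite /vadd addrAC. Qed.

Lemma vnorm_ev j : vnorm (ev j) = 1.
Proof. by rewrite /vnorm (bigD1 j) //= /ev eqxx big1 ?addr0 // => i /negPf ->. Qed.

Lemma vnorm_vadd v w : vnorm (vadd v w) = vnorm v + vnorm w.
Proof. exact: big_split. Qed.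

Lemma vnorm_vsub v w : vnorm (vsub v w) = vnorm v - vnorm w.
Proof. by rewrite /vnorm /vsub big_split /= sumrN. Qed.

Lemma vnorm_vaddev v j : vnorm (vadd v (ev j)) = vnorm v + 1.
Proof. by rewrite vnorm_vadd vnorm_ev. Qed.

Lemma vnorm_vsubev v j : vnorm (vsub v (ev j)) = vnorm v - 1.
Proof. by rewrite vnorm_vsub vnorm_ev. Qed.

Lemma inC2rP n m : reflect (forall j, 0 <= n j + m j) (inC2r n m).
Proof. exact: forallP. Qed.

Lemma inC2rC n m : inC2r n m = inC2r m n.
Proof. by apply/inC2rP/inC2rP => nm j; rewrite addrC. Qed.

Lemma inC2r_vsubev n m j : inC2r n m -> 0 < n j + m j -> inC2r (vsub n (ev j)) m.
Proof.
move=> /inC2rP nm nmj; apply/inC2rP => i; rewrite vsubE.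
by have [->|_] := eqVneq i j; [lia | have := nm i; lia].
Qed.

Lemma dimTC n m : dimT n m = dimT m n.
Proof. by rewrite /dimT addrC. Qed.

Lemma dimTE n m : inC2r n m -> (dimT n m)%:Z = vnorm n + vnorm m.
Proof.
move=> /inC2rP nm; rewrite /dimT gez0_abs // /vnorm -big_split.
by apply: sumr_ge0 => i _; apply: nm.
Qed.

Lemma dimT_shift n m n' m' d : inC2r n m ->
  vnorm n' + vnorm m' = vnorm n + vnorm m + d%:Z -> dimT n' m' = (dimT n m + d)%N.
Proof. by move=> nm E; rewrite /dimT E -(dimTE nm) -PoszD absz_nat. Qed.

Lemma dimT_vaddev_l n m j : inC2r n m -> dimT (vadd n (ev j)) m = (dimT n m).+1.
Proof. by move=> nm; rewrite -addn1; apply: dimT_shift nm _; rewrite vnorm_vaddev addrAC. Qed.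

Lemma dimT_vsubev_l n m j : inC2r (vsub n (ev j)) m -> dimT n m = (dimT (vsub n (ev j)) m).+1.
Proof. by move=> nm; rewrite -(dimT_vaddev_l j nm) vsubK. Qed.

Lemma dimT_gt0_r n m : (0 < dimT n m)%N -> (0 < r)%N.
Proof. by case: r n m => // n m; rewrite /dimT /vnorm !big_ord0. Qed.

Lemma mem_irange lo hi k : (k \in irange lo hi) = (lo <= k < hi).
Proof.
rewrite /irange; case: ifP => [le_lo_hi | /negbT]; last first.
  by rewrite -ltNge /= in_nil => lt_hi_lo; apply/esym/negbTE; lia.
apply/mapP/idP => [[t] | /andP[lo_k k_hi]].
  by rewrite mem_iota add0n => /andP[_]; rewrite -ltz_nat gez0_abs ?subr_ge0 // => ? ->; lia.
exists `|k - lo|%N; last by rewrite gez0_abs ?subr_ge0 // subrKC.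
by rewrite mem_iota add0n /= -ltz_nat !gez0_abs ?subr_ge0 //; lia.
Qed.

Lemma mem_Trows n m j k : ((j, k) \in Trows n m) = (- m j <= k < n j).
Proof.
apply/allpairsPdep/idP => [[j' [k' [_ + [-> ->]]]] | jk]; first by rewrite mem_irange.
by exists j, k; rewrite mem_enum mem_irange.
Qed.

Lemma size_Trows n m : inC2r n m -> size (Trows n m) = dimT n m.
Proof.
move=> nm; apply/eqP; rewrite -eqz_nat dimTE //; apply/eqP.
rewrite size_allpairs_dep sumnE big_map -natz natr_sum /vnorm -big_split big_enum /=.
apply: eq_bigr => j _; rewrite /irange size_map size_iota.
move/inC2rP: nm => /(_ j) nmj; have -> : - m j <= n j by lia.
by rewrite natz gez0_abs; lia.
Qed.

End MultiIndices.

Lemma size_XM_leq (C : nzRingType) (p : {poly C}) : (size ('X * p)%R <= (size p).+1)%N.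
Proof. by have [->|p0] := eqVneq p 0; rewrite ?mulr0 ?size_poly0 // -commr_polyX size_mulX. Qed.

Lemma size_poly_leq_pred (C : nzRingType) (p : {poly C}) N :
  (size p <= N.+1)%N -> p`_N = 0 -> (size p <= N)%N.
Proof.
move=> pN pN0; apply/leq_sizeP => i; rewrite leq_eqVlt => /orP[/eqP <- // | Ni].
exact: nth_default (leq_trans pN Ni).
Qed.

Lemma XM_drop_poly1 (C : nzRingType) (p : {poly C}) : p`_0 = 0 -> 'X * drop_poly 1 p = p.
Proof. by move=> p0; apply/polyP => -[|i]; rewrite coefXM ?p0 // coef_drop_poly addn1. Qed.

Lemma cross_ratio_eq (F : fieldType) (a b x y g h : F) :
  b != 0 -> y != 0 -> - x = g * a -> - y = h * b -> a / b * g = x / y * h.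
Proof.
move=> b_neq0 y_neq0 xa yb; rewrite -[h](mulfK b_neq0) -yb.
by rewrite mulNr mulrN mulrA divfK // mulrAC [a * _]mulrC -xa mulNr.
Qed.

Section Moments.
Variables (C : fieldType) (r : nat) (c : int -> 'I_r -> C).

(* [mom j t p] is L_j[w^(-t) p(w)]. *)
Definition mom (j : 'I_r) (t : int) (p : {poly C}) : C :=
  \sum_(i < size p) p`_i * c (t - i%:Z) j.

Lemma LwE j d p k : Lw c j d p k = mom j (k - d) p.
Proof. by []. Qed.

Lemma mom_widen j t (p : {poly C}) N : (size p <= N)%N ->
  mom j t p = \sum_(i < N) p`_i * c (t - i%:Z) j.
Proof.
move=> leN; rewrite /mom (big_ord_widen N (fun i => p`_i * c (t - i%:Z) j) leN) big_mkcond.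
by apply: eq_bigr => i _; case: ltnP => // /(nth_default 0) ->; rewrite mul0r.
Qed.

Fact mom_is_linear j t : linear_for *%R (mom j t).
Proof.
move=> a p q; pose N := maxn (size (a *: p + q)) (maxn (size p) (size q)).
have le_p : (size p <= N)%N by rewrite leq_max leq_maxl orbT.
have le_q : (size q <= N)%N by rewrite leq_max leq_maxr orbT.
rewrite !(@mom_widen _ _ _ N) ?leq_maxl // mulr_sumr -big_split.
by apply: eq_bigr => i _; rewrite coefD coefZ mulrDl mulrA.
Qed.

HB.instance Definition _ j t :=
  GRing.isLinear.Build C {poly C} C *%R (mom j t) (mom_is_linear j t).

Lemma momD j t p q : mom j t (p + q) = mom j t p + mom j t q.
Proof. exact: linearD. Qed.

Lemma momB j t p q : mom j t (p - q) = mom j t p - mom j t q.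
Proof. exact: linearB. Qed.

Lemma momZ j t a p : mom j t (a *: p) = a * mom j t p.
Proof. exact: linearZ. Qed.

Lemma mom_sum j t (I : Type) (s : seq I) (P : pred I) (F : I -> {poly C}) :
  mom j t (\sum_(i <- s | P i) F i) = \sum_(i <- s | P i) mom j t (F i).
Proof. exact: raddf_sum. Qed.

Lemma momXM j t p : mom j t ('X * p) = mom j (t - 1) p.
Proof.
rewrite (@mom_widen _ _ _ (size p).+1) ?size_XM_leq //.
rewrite big_ord_recl coefXM mul0r add0r; apply: eq_bigr => i _.
by rewrite coefXM /=; congr (_ * c _ j); rewrite /bump /= PoszD opprD addrA.
Qed.

(* With [p] standing for z^(-|m|) p(z), [s = |m|] gives the conditions defining Phi_{n;m}
   and [s = |m| + 1] those defining Phi*_{n;m}. *)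
Definition orth (n m : mi r) (s : int) (p : {poly C}) : Prop :=
  forall j k, - m j <= k < n j -> mom j (k + s) p = 0.

Lemma orthW n m s n' m' s' p :
  (forall j k, - m' j <= k < n' j -> - m j <= k + s' - s < n j) ->
  orth n m s p -> orth n' m' s' p.
Proof. by move=> sub_nm p_nm j k /sub_nm /p_nm; rewrite subrK. Qed.

Lemma orthXM n m s p : orth n m (s + 1) ('X * p) <-> orth n m s p.
Proof. by split=> p_nm j k /p_nm; rewrite momXM addrA addrK. Qed.

Lemma orthB n m s p q : orth n m s p -> orth n m s q -> orth n m s (p - q).
Proof. by move=> p_nm q_nm j k jk; rewrite momB p_nm ?q_nm ?subr0. Qed.

Lemma orthZ n m s a p : orth n m s p -> orth n m s (a *: p).
Proof. by move=> p_nm j k jk; rewrite momZ p_nm ?mulr0. Qed.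

End Moments.

Section MomentMatrix.
Variables (C : fieldType) (r : nat) (c : int -> 'I_r -> C) (n m : mi r).
Hypothesis nm : inC2r n m.
Local Notation D := (dimT n m).
Local Notation T := (Tmat c n m).
Implicit Types (q : {poly C}) (v : 'cV[C]_D).

Lemma Tmat_mul_coefs q (a : 'I_D) x0 : (size q <= D)%N ->
  (T *m \col_(b < D) q`_b) a 0 =
    mom c (nth x0 (Trows n m) a).1 ((nth x0 (Trows n m) a).2 + vnorm m) q.
Proof.
move=> qD; rewrite !mxE (mom_widen _ _ _ qD); apply: eq_bigr => b _.
by rewrite !mxE (nth_map x0) ?size_Trows // mulrC opprB addrA.
Qed.

Definition poly_of_col (v : 'cV[C]_D) : {poly C} := Poly [seq v b 0 | b <- enum 'I_D].

Lemma size_poly_of_col v : (size (poly_of_col v) <= D)%N.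
Proof. by rewrite (leq_trans (size_Poly _)) // size_map size_enum_ord. Qed.

Lemma coef_poly_of_col v (b : 'I_D) : (poly_of_col v)`_b = v b 0.
Proof. by rewrite coef_Poly (nth_map b) ?nth_ord_enum // size_enum_ord. Qed.

Lemma col_coefs_poly v : \col_(b < D) (poly_of_col v)`_b = v.
Proof. by apply/matrixP => b i; rewrite !mxE coef_poly_of_col ord1. Qed.

Lemma Tmat_mul_coefs_eq0 q : (size q <= D)%N -> orth c n m (vnorm m) q ->
  T *m \col_(b < D) q`_b = 0.
Proof.
move=> qD q_nm; apply/matrixP => a i; rewrite ord1 [RHS]mxE.
have x0 : 'I_r * int := (Ordinal (dimT_gt0_r (leq_ltn_trans (leq0n a) (ltn_ord a))), 0).
rewrite (Tmat_mul_coefs _ x0 qD).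
apply: q_nm; rewrite -mem_Trows -surjective_pairing mem_nth // size_Trows //.
Qed.

Lemma unitmx_orth_eq0 q : T \in unitmx -> (size q <= D)%N -> orth c n m (vnorm m) q -> q = 0.
Proof.
move=> T_unit qD q_nm; have q_coefs0 : \col_(b < D) q`_b = 0.
  by rewrite -(mulKmx T_unit (\col_b q`_b)) Tmat_mul_coefs_eq0 // mulmx0.
apply/polyP => i; rewrite coef0; have [iD | /(leq_trans qD) /(nth_default 0) //] := ltnP i D.
by have := congr1 (fun v : 'cV_D => v (Ordinal iD) 0) q_coefs0; rewrite !mxE.
Qed.

Lemma unitmx_interpolation (g : 'I_r -> int -> C) : T \in unitmx ->
  exists2 q : {poly C}, (size q <= D)%N &
    forall j k, - m j <= k < n j -> mom c j (k + vnorm m) q = g j k.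
Proof.
move=> T_unit; pose w := \col_(a < D) nth 0 [seq g x.1 x.2 | x <- Trows n m] a.
exists (poly_of_col (invmx T *m w)); first exact: size_poly_of_col.
move=> j k jk; have jk_row : (j, k) \in Trows n m by rewrite mem_Trows.
have a_lt : (index (j, k) (Trows n m) < D)%N by rewrite -size_Trows // index_mem.
have := Tmat_mul_coefs (q := poly_of_col (invmx T *m w)) (Ordinal a_lt) (j, k).
rewrite /= nth_index // => <-; last exact: size_poly_of_col.
by rewrite col_coefs_poly mulKVmx // mxE (nth_map (j, k)) ?nth_index ?size_Trows.
Qed.

Lemma orth_eq0_unitmx : (forall q, (size q <= D)%N -> orth c n m (vnorm m) q -> q = 0) ->
  T \in unitmx.
Proof.
move=> orth0; rewrite -unitmx_tr -row_free_unit; apply: inj_row_free => v vT0.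
pose q := poly_of_col v^T.
have Tq0 : T *m \col_(b < D) q`_b = 0 by rewrite col_coefs_poly -[T]trmxK -trmx_mul vT0 trmx0.
have q0 : q = 0.
  apply: orth0 => [|j k jk]; first exact: size_poly_of_col.
  have a_lt : (index (j, k) (Trows n m) < D)%N by rewrite -size_Trows // index_mem mem_Trows.
  have := Tmat_mul_coefs (Ordinal a_lt) (j, k) (size_poly_of_col v^T).
  by rewrite Tq0 mxE nth_index ?mem_Trows.
apply/rowP => b; have := congr1 (fun p : {poly C} => p`_b) q0.
by rewrite coef_poly_of_col coef0 !mxE.
Qed.

Lemma normal_unitmx : normal c n m <-> T \in unitmx.
Proof.
rewrite /normal unitmxE unitfE; case: ifP => // /forallP nm0; split=> // _.
have D0 : D = 0%N.
  apply/eqP; rewrite -eqz_nat dimTE // /vnorm -big_split big1 // => i _.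
  by rewrite (eqP (nm0 i)); exact: addNr.
by move: T; rewrite D0 => A; rewrite det_mx00 oner_neq0.
Qed.

End MomentMatrix.

Ltac window := let i := fresh "i" in let k := fresh "k" in
  move=> i k; rewrite ?vaddE ?vsubE; lia.

Section OrthogonalPolynomials.
Variables (C : fieldType) (r : nat) (c : int -> 'I_r -> C).
Implicit Types (n m : mi r) (p q : {poly C}).

Lemma good_orth_eq0 n m q : good c n m ->
  (size q <= dimT n m)%N -> orth c n m (vnorm m) q -> q = 0.
Proof. by case=> nm /(normal_unitmx c nm); apply: unitmx_orth_eq0. Qed.

Lemma good_interpolation n m (g : 'I_r -> int -> C) : good c n m ->
  exists2 q : {poly C}, (size q <= dimT n m)%N &
    forall j k, - m j <= k < n j -> mom c j (k + vnorm m) q = g j k.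
Proof. by case=> nm /(normal_unitmx c nm); apply: unitmx_interpolation. Qed.

Lemma orth_vaddev n m s p j :
  orth c n m s p -> mom c j (n j + s) p = 0 -> orth c (vadd n (ev j)) m s p.
Proof.
move=> p_nm p_nj i k; rewrite vaddE; have [->|ij] := eqVneq i j; last first.
  by rewrite addr0; apply: p_nm.
by case: (ltrP k (n j)) => [? ?|? ?]; [apply: p_nm; lia | have -> : k = n j by lia].
Qed.

Lemma isPhiE n m p : isPhi c n m p <->
  [/\ (size p <= (dimT n m).+1)%N, p`_(dimT n m) = 1 & orth c n m (vnorm m) p].
Proof.
rewrite /isPhi /orth; split=> [[? [? p_nm]] | [? ? p_nm]].
  by split=> // j k; rewrite -mem_irange => /p_nm; rewrite LwE opprK.
by do 2!split=> //; move=> j k; rewrite mem_irange LwE opprK => /p_nm.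
Qed.

Lemma isPhiSE n m p : isPhiS c n m p <->
  [/\ (size p <= (dimT n m).+1)%N, p`_0 = 1 & orth c n m (vnorm m + 1) p].
Proof.
rewrite /isPhiS /orth; split=> [[? [? p_nm]] | [? ? p_nm]].
  split=> // j k jk; have := p_nm j (k + 1).
  by rewrite mem_irange LwE opprK addrAC -addrA; apply; lia.
do 2!split=> //; move=> j k; rewrite mem_irange LwE opprK => jk.
by have := p_nm j (k - 1); rewrite addrA addrAC subrK; apply; lia.
Qed.

Section Normalized.
Variables n m : mi r.
Hypothesis nm_good : good c n m.
Local Notation D := (dimT n m).

Lemma PhiP :
  [/\ (size (Phi c n m) <= D.+1)%N, (Phi c n m)`_D = 1 & orth c n m (vnorm m) (Phi c n m)].
Proof.
apply/isPhiE/(epsilon_spec (inhabits 0) (isPhi c n m)).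
have [q qD q_mom] := good_interpolation (fun j k => mom c j (k + vnorm m) 'X^D) nm_good.
exists ('X^D - q); apply/isPhiE; split.
- by rewrite (leq_trans (size_polyD _ _)) // size_polyN size_polyXn geq_max leqnn ltnW.
- by rewrite coefB coefXn eqxx (nth_default 0 qD) subr0.
- by move=> j k jk; rewrite momB q_mom // subrr.
Qed.

Lemma PhiSP :
  [/\ (size (PhiS c n m) <= D.+1)%N, (PhiS c n m)`_0 = 1 &
       orth c n m (vnorm m + 1) (PhiS c n m)].
Proof.
apply/isPhiSE/(epsilon_spec (inhabits 0) (isPhiS c n m)).
have [q qD q_mom] := good_interpolation (fun j k => mom c j (k + (vnorm m + 1)) 1) nm_good.
exists (1 - 'X * q); apply/isPhiSE; split.
- rewrite (leq_trans (size_polyD _ _)) // size_polyN size_poly1 geq_max.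
  exact: leq_trans (size_XM_leq _) _.
- by rewrite coefB coefC coefXM subr0.
- by move=> j k jk; rewrite momB momXM addrA addrK q_mom // addrA subrr.
Qed.

Lemma PhiU q : (size q <= D.+1)%N -> orth c n m (vnorm m) q -> q = q`_D *: Phi c n m.
Proof.
have [Phi_size Phi_lead Phi_orth] := PhiP; move=> qD q_nm.
apply/eqP; rewrite -subr_eq0; apply/eqP/(good_orth_eq0 nm_good).
- apply: size_poly_leq_pred; last by rewrite coefB coefZ Phi_lead mulr1 subrr.
  rewrite (leq_trans (size_polyD _ _)) // size_polyN geq_max qD.
  exact: leq_trans (size_scale_leq _ _) _.
- exact/orthB/orthZ.
Qed.

Lemma PhiSU q : (size q <= D.+1)%N -> orth c n m (vnorm m + 1) q -> q = q`_0 *: PhiS c n m.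
Proof.
have [PhiS_size PhiS_0 PhiS_orth] := PhiSP; move=> qD q_nm.
set d := q - q`_0 *: PhiS c n m.
have d0 : d`_0 = 0 by rewrite coefB coefZ PhiS_0 mulr1 subrr.
have d_quo0 : drop_poly 1 d = 0.
  apply: (good_orth_eq0 nm_good).
    rewrite size_drop_poly leq_subLR add1n (leq_trans (size_polyD _ _)) //.
    by rewrite size_polyN geq_max qD (leq_trans (size_scale_leq _ _)).
  by apply/orthXM; rewrite XM_drop_poly1 //; apply/orthB/orthZ.
by apply/eqP; rewrite -subr_eq0 -/d -(XM_drop_poly1 d0) d_quo0 mulr0.
Qed.

End Normalized.
End OrthogonalPolynomials.

Section Recurrences.
Variables (C : fieldType) (r : nat) (c : int -> 'I_r -> C).
Implicit Types (n m : mi r) (p q : {poly C}).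

Lemma rhoE n m j : inC2r (vsub n (ev j)) m -> rho c n m j =
  mom c j (n j + vnorm m) (Phi c n m) / mom c j (n j - 1 + vnorm m) (Phi c (vsub n (ev j)) m).
Proof. by move=> nm_j; rewrite /rho nm_j !LwE !opprK. Qed.

Lemma gammaE k l n m : gamma c k l n m =
  mom c l (n l + vnorm m) (Phi c (vadd n (ev k)) m) / mom c l (n l + vnorm m) (Phi c n m).
Proof. by rewrite /gamma !LwE !opprK. Qed.

Lemma mom_Phi_neq0 n m j : good c n m -> good c (vadd n (ev j)) m ->
  mom c j (n j + vnorm m) (Phi c n m) != 0.
Proof.
move=> nm_good nmj_good; apply/eqP => Phi_nj.
have [Phi_size Phi_lead Phi_orth] := PhiP nm_good.
have D_nmj : dimT (vadd n (ev j)) m = (dimT n m).+1 by rewrite dimT_vaddev_l ?nm_good.1.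
have := PhiU nmj_good (q := Phi c n m); rewrite D_nmj (nth_default 0 Phi_size) scale0r.
move=> /(_ (leqW Phi_size) (orth_vaddev Phi_orth Phi_nj)) Phi0.
by move: Phi_lead; rewrite Phi0 coef0 => /eqP; rewrite eq_sym oner_eq0.
Qed.

Lemma Phi_diff n m k l : k != l ->
  good c n m -> good c (vadd n (ev k)) m -> good c (vadd n (ev l)) m ->
  Phi c (vadd n (ev k)) m - Phi c (vadd n (ev l)) m = gamma c k l n m *: Phi c n m.
Proof.
move=> kl nm_good nmk_good nml_good; have nm := nm_good.1.
have [Pk_size Pk_lead Pk_orth] := PhiP nmk_good.
have [Pl_size Pl_lead Pl_orth] := PhiP nml_good.
rewrite dimT_vaddev_l // in Pk_size Pk_lead; rewrite dimT_vaddev_l // in Pl_size Pl_lead.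
set d := _ - _.
have d_eq : d = d`_(dimT n m) *: Phi c n m.
  apply: (PhiU nm_good).
    apply: size_poly_leq_pred; last by rewrite coefB Pk_lead Pl_lead subrr.
    by rewrite (leq_trans (size_polyD _ _)) // size_polyN geq_max Pk_size.
  by apply: orthB; [apply: orthW Pk_orth | apply: orthW Pl_orth]; window.
have mom_d : mom c l (n l + vnorm m) (Phi c (vadd n (ev k)) m) =
    d`_(dimT n m) * mom c l (n l + vnorm m) (Phi c n m).
  rewrite -momZ -d_eq momB (Pl_orth l (n l)) ?subr0 //.
  by move/inC2rP: nm => /(_ l); rewrite vaddE eqxx; lia.
by rewrite {1}d_eq gammaE mom_d mulfK // (mom_Phi_neq0 nm_good nml_good).
Qed.

Lemma PhiS_step n m j : good c n m -> good c (vadd n (ev j)) m ->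
  PhiS c (vadd n (ev j)) m = PhiS c n m + beta c (vadd n (ev j)) m *: ('X * Phi c n m).
Proof.
move=> nm_good nmj_good; have nm := nm_good.1.
have [P_size P_lead P_orth] := PhiP nm_good; have [S_size S_0 S_orth] := PhiSP nmj_good.
rewrite /beta dimT_vaddev_l // in S_size *.
set b := _`_(dimT n m).+1.
set e := PhiS c (vadd n (ev j)) m - b *: ('X * Phi c n m).
suff <- : e = PhiS c n m by rewrite subrK.
have e_0 : e`_0 = 1 by rewrite coefB coefZ coefXM S_0 mulr0 subr0.
rewrite [LHS](PhiSU nm_good) ?e_0 ?scale1r //.
  apply: size_poly_leq_pred; last by rewrite coefB coefZ coefXM P_lead mulr1 subrr.
  rewrite (leq_trans (size_polyD _ _)) // size_polyN geq_max S_size.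
  by rewrite (leq_trans (size_scale_leq _ _)) // (leq_trans (size_XM_leq _)).
by apply: orthB; [apply: orthW S_orth; window | apply/orthZ/orthXM].
Qed.

Lemma Phi_recurrence n m : good c n m ->
  (forall j, inC2r (vsub n (ev j)) m -> normal c (vsub n (ev j)) m) ->
  Phi c n m = alpha c n m *: PhiS c n m +
    \sum_(j < r) rho c n m j *: ('X * Phi c (vsub n (ev j)) m).
Proof.
move=> nm_good sub_normal; have nm := nm_good.1.
have sub_good j : inC2r (vsub n (ev j)) m -> good c (vsub n (ev j)) m.
  by split; last apply: sub_normal.
have [P_size P_lead P_orth] := PhiP nm_good; have [S_size S_0 S_orth] := PhiSP nm_good.
pose t j := rho c n m j *: ('X * Phi c (vsub n (ev j)) m).
have t_size j : (size (t j) <= (dimT n m).+1)%N.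
  rewrite /t /rho; case: ifP => [nmj | _]; last by rewrite scale0r size_poly0.
  have [Pj_size _ _] := PhiP (sub_good j nmj).
  rewrite (leq_trans (size_scale_leq _ _)) // (leq_trans (size_XM_leq _)) //.
  by rewrite (dimT_vsubev_l nmj).
have t_mom i j k : - m i <= k < n i -> (i != j) || (k + 1 != n i) ->
    mom c i (k + 1 + vnorm m) (t j) = 0.
  rewrite /t /rho; case: ifP => [nmj | _] ik ijk; last by rewrite momZ mul0r.
  have [_ _ Pj_orth] := PhiP (sub_good j nmj).
  by rewrite momZ momXM addrAC addrK Pj_orth ?mulr0 // vsubE; lia.
apply/eqP; rewrite -subr_eq0; apply/eqP; set q := _ - _.
have q_0 : q`_0 = 0.
  rewrite coefB coefD coefZ S_0 mulr1 coef_sum big1 ?addr0 ?subrr // => j _.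
  by rewrite /t coefZ coefXM mulr0.
rewrite (PhiSU nm_good (q := q)) ?q_0 ?scale0r //.
  rewrite (leq_trans (size_polyD _ _)) // size_polyN geq_max P_size.
  rewrite (leq_trans (size_polyD _ _)) // geq_max (leq_trans (size_scale_leq _ _)) //.
  by rewrite (leq_trans (size_sum _ _ _)) //; apply/bigmax_leqP => j _; apply: t_size.
move=> i k ik; rewrite momB momD momZ S_orth // mulr0 add0r mom_sum addrA addrAC.
have [k1_lt | k1_ge] := ltrP (k + 1) (n i).
  rewrite P_orth; last by lia.
  by rewrite big1 ?subrr // => j _; apply: t_mom; rewrite // orbC; lia.
(* At the top of the window only the term [j = i] survives; it cancels by the choice of rho. *)
have k1_eq : k + 1 = n i by lia.
rewrite (bigD1 i) //= big1 ?addr0 => [|j ji]; last by apply: t_mom; rewrite // eq_sym ji.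
have nmi : inC2r (vsub n (ev i)) m by apply: inC2r_vsubev; lia.
rewrite /t momZ momXM rhoE // k1_eq addrAC divfK ?subrr //.
by have := mom_Phi_neq0 (sub_good i nmi) (j := i); rewrite vsubK vsubE eqxx addrAC; apply.
Qed.

End Recurrences.

Section Identities.
Variables (C : fieldType) (r : nat) (c : int -> 'I_r -> C).
Variables (n m : mi r) (k l : 'I_r).
Hypothesis kl : k != l.
Hypothesis nm_good : good c n m.
Let nm := nm_good.1.

Lemma alpha_beta_rho_sum :
  (forall j, inC2r (vsub n (ev j)) m -> normal c (vsub n (ev j)) m) ->
  alpha c n m * beta c n m + \sum_(j < r) rho c n m j = 1.
Proof.
move=> sub_normal; have [_ P_lead _] := PhiP nm_good.
have coef_rho j : (rho c n m j *: ('X * Phi c (vsub n (ev j)) m))`_(dimT n m) = rho c n m j.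
  rewrite coefZ; have [nmj | /negbTE nmj] := boolP (inC2r (vsub n (ev j)) m); last first.
    by rewrite /rho nmj mul0r.
  have [_ Pj_lead _] := PhiP (conj nmj (sub_normal j nmj)).
  by rewrite (dimT_vsubev_l nmj) coefXM Pj_lead mulr1.
have := congr1 (fun p : {poly C} => p`_(dimT n m)) (Phi_recurrence nm_good sub_normal).
by rewrite /= coefD coefZ coef_sum P_lead (eq_bigr _ (fun j _ => coef_rho j)) => ->.
Qed.

Hypotheses (nmk_good : good c (vadd n (ev k)) m) (nml_good : good c (vadd n (ev l)) m).

Lemma alpha_diff_gamma :
  alpha c (vadd n (ev k)) m - alpha c (vadd n (ev l)) m = alpha c n m * gamma c k l n m.
Proof.
have := congr1 (fun p : {poly C} => p`_0) (Phi_diff kl nm_good nmk_good nml_good).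
by rewrite /= coefB coefZ mulrC.
Qed.

Lemma beta_diff_gamma : good c (vadd (vadd n (ev l)) (ev k)) m ->
  beta c (vadd n (ev l)) m - beta c (vadd n (ev k)) m =
    beta c (vadd (vadd n (ev l)) (ev k)) m * gamma c k l n m.
Proof.
rewrite vaddAC => nmkl_good; set t := n l + vnorm m + 1.
have mom_S_nml : mom c l t (PhiS c (vadd n (ev l)) m) = 0.
  have [_ _ S_orth] := PhiSP nml_good; rewrite /t -addrA S_orth //.
  by move/inC2rP: nm => /(_ l); rewrite vaddE eqxx; lia.
have mom_S_nmkl : mom c l t (PhiS c (vadd (vadd n (ev k)) (ev l)) m) = 0.
  have [_ _ S_orth] := PhiSP nmkl_good; rewrite /t -addrA S_orth //.
  by move/inC2rP: nm => /(_ l); rewrite !vaddE eqxx; lia.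
have mom_step j p : mom c l t (p + beta c (vadd n (ev j)) m *: ('X * Phi c n m)) =
    mom c l t p + beta c (vadd n (ev j)) m * mom c l (n l + vnorm m) (Phi c n m).
  by rewrite momD momZ momXM /t addrK.
have := congr1 (mom c l t) (PhiS_step nm_good nml_good).
rewrite mom_step mom_S_nml => /esym/eqP; rewrite addr_eq0 => /eqP S_nm.
have := congr1 (mom c l t) (PhiS_step nm_good nmk_good); rewrite mom_step S_nm => S_nmk.
have := congr1 (mom c l t) (PhiS_step nmk_good nmkl_good).
rewrite mom_S_nmkl momD momZ momXM /t addrK S_nmk => /esym/eqP.
rewrite addr_eq0 => /eqP num_eq.
rewrite gammaE mulrA; apply: (canRL (mulfK (mom_Phi_neq0 nm_good nml_good))).
by rewrite -[RHS]opprK -num_eq mulrBl opprD opprK.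
Qed.

Lemma rho_gamma_shift : good c (vsub n (ev k)) m -> good c (vsub (vadd n (ev l)) (ev k)) m ->
  rho c n m k * gamma c k l n m = rho c (vadd n (ev l)) m k * gamma c k l (vsub n (ev k)) m.
Proof.
move=> nm'_good nml'_good.
have nm'k_good : good c (vadd (vsub n (ev k)) (ev k)) m by rewrite vsubK.
have nm'l_good : good c (vadd (vsub n (ev k)) (ev l)) m by rewrite -vsub_vadd.
have diff_n := Phi_diff kl nm_good nmk_good nml_good.
have diff_n' := Phi_diff kl nm'_good nm'k_good nm'l_good; rewrite vsubK -vsub_vadd in diff_n'.
have [_ _ P_orth] := PhiP nm_good; have [_ _ Pk_orth] := PhiP nmk_good.
have P0 : mom c k (n k - 1 + vnorm m) (Phi c n m) = 0.
  by apply: P_orth; move/inC2rP: nm'_good.1 => /(_ k); rewrite vsubE eqxx; lia.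
have Pk0 : mom c k (n k + vnorm m) (Phi c (vadd n (ev k)) m) = 0.
  by apply: Pk_orth; move/inC2rP: nm => /(_ k); rewrite vaddE eqxx; lia.
have := congr1 (mom c k (n k - 1 + vnorm m)) diff_n'; rewrite momB momZ P0 sub0r => den_l_eq.
have := congr1 (mom c k (n k + vnorm m)) diff_n; rewrite momB momZ Pk0 sub0r => num_l_eq.
rewrite rhoE ?nm'_good.1 // rhoE ?nml'_good.1 // vaddE (negPf kl) addr0.
have den_neq0 := mom_Phi_neq0 nm'_good nm'k_good; rewrite vsubE eqxx in den_neq0.
have := mom_Phi_neq0 nml'_good (j := k).
rewrite vsubK vsubE eqxx vaddE (negPf kl) addr0 => /(_ nml_good) den_l_neq0.
exact: cross_ratio_eq den_neq0 den_l_neq0 num_l_eq den_l_eq.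
Qed.

End Identities.

Section Reflection.
Variables (C : fieldType) (r : nat).
Implicit Types (c : int -> 'I_r -> C) (n m : mi r) (p q : {poly C}).

(* The substitution w -> 1/w, on moments and on polynomials of degree at most [N]. *)
Definition crefl c : int -> 'I_r -> C := fun t j => c (- t) j.

Lemma creflK c : crefl (crefl c) = c.
Proof. by apply: functional_extensionality => t; rewrite /crefl opprK. Qed.

Definition prefl (N : nat) p : {poly C} := \poly_(i < N.+1) p`_(N - i).

Lemma size_prefl N p : (size (prefl N p) <= N.+1)%N.
Proof. exact: size_poly. Qed.

Lemma coef_prefl N p i : (i <= N)%N -> (prefl N p)`_i = p`_(N - i).
Proof. by move=> iN; rewrite coef_poly ltnS iN. Qed.

Lemma prefl0 N : prefl N 0 = 0.
Proof. by apply/polyP => i; rewrite coef_poly !coef0 if_same. Qed.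

Lemma preflK N p : (size p <= N.+1)%N -> prefl N (prefl N p) = p.
Proof.
move=> pN; apply/polyP => i; rewrite coef_poly ltnS.
case: leqP => [iN | /(leq_trans pN) /(nth_default 0) -> //].
by rewrite coef_prefl ?leq_subr // subKn.
Qed.

Lemma mom_prefl c j t N p : (size p <= N.+1)%N ->
  mom c j t (prefl N p) = mom (crefl c) j (N%:Z - t) p.
Proof.
move=> pN; rewrite (mom_widen _ _ _ (size_prefl N p)) (mom_widen _ _ _ pN).
rewrite (reindex_inj rev_ord_inj); apply: eq_bigr => i _ /=.
have iN : (i <= N)%N by rewrite -ltnS.
by rewrite subSS coef_prefl ?leq_subr // subKn // /crefl; congr (_ * c _ j); lia.
Qed.

Lemma orth_prefl c n m s s' N p : (size p <= N.+1)%N -> s + s' = N.+1%:Z ->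
  orth c n m s p -> orth (crefl c) m n s' (prefl N p).
Proof.
move=> pN ss' p_nm j k jk; rewrite mom_prefl // creflK.
have -> : N%:Z - (k + s') = - k - 1 + s by lia.
apply: p_nm; lia.
Qed.

Lemma good_crefl c n m : good c n m -> good (crefl c) m n.
Proof.
move=> nm_good; have nm := nm_good.1; have mn : inC2r m n by rewrite inC2rC.
split=> //; apply/(normal_unitmx _ mn)/orth_eq0_unitmx => // q; rewrite dimTC => qD q_mn.
move: qD; case D_eq : (dimT n m) => [|N] qD; first exact/size_poly_leq0P.
have D_eqz : vnorm n + vnorm m = N.+1%:Z by rewrite -D_eq dimTE.
have := orth_prefl (s' := vnorm m) qD D_eqz q_mn; rewrite creflK => pq_nm.
by rewrite -(preflK qD) (good_orth_eq0 nm_good _ pq_nm) ?prefl0 ?D_eq ?size_prefl.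
Qed.

Lemma PhiS_crefl c n m : good c n m -> PhiS c n m = prefl (dimT n m) (Phi (crefl c) m n).
Proof.
move=> nm_good; have [P_size P_lead P_orth] := PhiP (good_crefl nm_good).
rewrite dimTC in P_size P_lead.
rewrite [RHS](PhiSU nm_good) ?coef_prefl ?subn0 ?P_lead ?scale1r ?size_prefl //.
have := orth_prefl (s' := vnorm m + 1) P_size _ P_orth; rewrite creflK; apply.
by have := dimTE nm_good.1; lia.
Qed.

Lemma Phi_crefl c n m : good c n m -> Phi c n m = prefl (dimT n m) (PhiS (crefl c) m n).
Proof.
move=> nm_good; have [S_size S_0 S_orth] := PhiSP (good_crefl nm_good); rewrite dimTC in S_size.
rewrite [RHS](PhiU nm_good) ?coef_prefl ?subnn ?S_0 ?scale1r ?size_prefl //.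
have := orth_prefl (s' := vnorm m) S_size _ S_orth; rewrite creflK; apply.
by have := dimTE nm_good.1; lia.
Qed.

Lemma alpha_crefl c n m : good c n m -> alpha c n m = beta (crefl c) m n.
Proof. by move=> nm_good; rewrite /alpha /beta (Phi_crefl nm_good) coef_prefl // subn0 dimTC. Qed.

Lemma beta_crefl c n m : good c n m -> beta c n m = alpha (crefl c) m n.
Proof. by move=> nm_good; rewrite /alpha /beta (PhiS_crefl nm_good) coef_prefl // subnn. Qed.

Lemma sigma_crefl c n m j : good c n m ->
  (inC2r n (vsub m (ev j)) -> normal c n (vsub m (ev j))) ->
  sigma c n m j = rho (crefl c) m n j.
Proof.
move=> nm_good sub_normal; rewrite /sigma /rho inC2rC; case: ifP => // mjn.
have nmj_good : good c n (vsub m (ev j)).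
  by split; [rewrite inC2rC | apply/sub_normal; rewrite inC2rC].
have [P_size _ _] := PhiP (good_crefl nm_good); have [Pj_size _ _] := PhiP (good_crefl nmj_good).
rewrite dimTC in P_size; rewrite dimTC in Pj_size.
rewrite !LwE (PhiS_crefl nm_good) (PhiS_crefl nmj_good) !mom_prefl //.
have := dimTE nm_good.1; have := dimTE nmj_good.1; rewrite vnorm_vsubev => D_nmj D_nm.
have -> : (dimT n m)%:Z - (- m j - - vnorm m) = m j - - vnorm n by lia.
have -> // : (dimT n (vsub m (ev j)))%:Z - (- (m j - 1) - - (vnorm m - 1)) = m j - 1 - - vnorm n.
by lia.
Qed.

Lemma etac_crefl c k l n m : good c n m -> good c n (vadd m (ev k)) ->
  etac c k l n m = gamma (crefl c) k l m n.
Proof.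
move=> nm_good nmk_good; have [P_size _ _] := PhiP (good_crefl nm_good).
have [Pk_size _ _] := PhiP (good_crefl nmk_good).
rewrite dimTC in P_size; rewrite dimTC in Pk_size.
rewrite /etac /gamma !LwE (PhiS_crefl nm_good) (PhiS_crefl nmk_good) !mom_prefl //.
have := dimTE nm_good.1; have := dimTE nmk_good.1; rewrite vnorm_vaddev => D_nmk D_nm.
have -> : (dimT n m)%:Z - (- m l - - vnorm m) = m l - - vnorm n by lia.
have -> // : (dimT n (vadd m (ev k)))%:Z - (- m l - - (vnorm m + 1)) = m l - - vnorm n.
by lia.
Qed.

End Reflection.

Section ReflectedIdentities.
Variables (C : fieldType) (r : nat) (c : int -> 'I_r -> C).
Variables (n m : mi r) (k l : 'I_r).
Hypothesis kl : k != l.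
Hypothesis nm_good : good c n m.

Lemma alpha_beta_sigma_sum :
  (forall j, inC2r n (vsub m (ev j)) -> normal c n (vsub m (ev j))) ->
  alpha c n m * beta c n m + \sum_(j < r) sigma c n m j = 1.
Proof.
move=> sub_normal; rewrite (eq_bigr _ (fun j _ => sigma_crefl nm_good (sub_normal j))).
rewrite (alpha_crefl nm_good) (beta_crefl nm_good) mulrC.
apply: alpha_beta_rho_sum (good_crefl nm_good) _.
move=> j mjn; rewrite inC2rC in mjn.
by have [] := good_crefl (conj mjn (sub_normal j mjn) : good c n (vsub m (ev j))).
Qed.

Hypotheses (nmk_good : good c n (vadd m (ev k))) (nml_good : good c n (vadd m (ev l))).

Lemma beta_diff_eta :
  beta c n (vadd m (ev k)) - beta c n (vadd m (ev l)) = beta c n m * etac c k l n m.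
Proof.
rewrite !beta_crefl // etac_crefl //.
exact: alpha_diff_gamma kl (good_crefl nm_good) (good_crefl nmk_good) (good_crefl nml_good).
Qed.

Lemma alpha_diff_eta : good c n (vadd (vadd m (ev l)) (ev k)) ->
  alpha c n (vadd m (ev l)) - alpha c n (vadd m (ev k)) =
    alpha c n (vadd (vadd m (ev l)) (ev k)) * etac c k l n m.
Proof.
move=> nmlk_good; rewrite !alpha_crefl // etac_crefl //.
exact: beta_diff_gamma kl (good_crefl nm_good) (good_crefl nmk_good) (good_crefl nml_good)
  (good_crefl nmlk_good).
Qed.

Lemma sigma_eta_shift : good c n (vsub m (ev k)) -> good c n (vsub (vadd m (ev l)) (ev k)) ->
  sigma c n m k * etac c k l n m =
    sigma c n (vadd m (ev l)) k * etac c k l n (vsub m (ev k)).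
Proof.
move=> nm'_good nml'_good.
have nm'k_good : good c n (vadd (vsub m (ev k)) (ev k)) by rewrite vsubK.
rewrite (sigma_crefl nm_good (fun _ => nm'_good.2)).
rewrite (sigma_crefl nml_good (fun _ => nml'_good.2)).
rewrite (etac_crefl _ nm_good nmk_good) (etac_crefl _ nm'_good nm'k_good).
exact: rho_gamma_shift kl (good_crefl nm_good) (good_crefl nmk_good) (good_crefl nml_good)
  (good_crefl nm'_good) (good_crefl nml'_good).
Qed.

End ReflectedIdentities.

Theorem theorem6p3 (R : realType) (r : nat) (hr : (0 < r)%N)
    (c : int -> 'I_r -> R[i]) (n m : mi r) (k l : 'I_r) (hkl : k != l) :
  (* (1) *)
  ((good c n m /\ (forall j, inC2r (vsub n (ev j)) m -> normal c (vsub n (ev j)) m)) ->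
     alpha c n m * beta c n m + \sum_(j < r) rho c n m j = 1) /\
  (* (2) *)
  ((good c n m /\ good c (vadd n (ev k)) m /\ good c (vadd n (ev l)) m) ->
     alpha c (vadd n (ev k)) m - alpha c (vadd n (ev l)) m
       = alpha c n m * gamma c k l n m) /\
  (* (3) *)
  ((good c n m /\ good c (vadd n (ev k)) m /\ good c (vadd n (ev l)) m /\
    good c (vadd (vadd n (ev l)) (ev k)) m) ->
     beta c (vadd n (ev l)) m - beta c (vadd n (ev k)) m
       = beta c (vadd (vadd n (ev l)) (ev k)) m * gamma c k l n m) /\
  (* (4) *)
  ((good c n m /\ good c (vsub n (ev k)) m /\ good c (vadd n (ev k)) m /\ good c (vadd n (ev l)) m /\
    good c (vsub (vadd n (ev l)) (ev k)) m) ->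
     rho c n m k * gamma c k l n m
       = rho c (vadd n (ev l)) m k * gamma c k l (vsub n (ev k)) m) /\
  (* (1') *)
  ((good c n m /\ (forall j, inC2r n (vsub m (ev j)) -> normal c n (vsub m (ev j)))) ->
     alpha c n m * beta c n m + \sum_(j < r) sigma c n m j = 1) /\
  (* (2') *)
  ((good c n m /\ good c n (vadd m (ev k)) /\ good c n (vadd m (ev l)) /\
    good c n (vadd (vadd m (ev l)) (ev k))) ->
     alpha c n (vadd m (ev l)) - alpha c n (vadd m (ev k))
       = alpha c n (vadd (vadd m (ev l)) (ev k)) * etac c k l n m) /\
  (* (3') *)
  ((good c n m /\ good c n (vadd m (ev k)) /\ good c n (vadd m (ev l))) ->
     beta c n (vadd m (ev k)) - beta c n (vadd m (ev l))
       = beta c n m * etac c k l n m) /\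
  (* (4') *)
  ((good c n m /\ good c n (vsub m (ev k)) /\ good c n (vadd m (ev k)) /\ good c n (vadd m (ev l)) /\
    good c n (vsub (vadd m (ev l)) (ev k))) ->
     sigma c n m k * etac c k l n m
       = sigma c n (vadd m (ev l)) k * etac c k l n (vsub m (ev k))).
Proof.
split; first by case; apply: alpha_beta_rho_sum.
split; first by case=> ? [? ?]; apply: alpha_diff_gamma.
split; first by case=> ? [? [? ?]]; apply: beta_diff_gamma.
split; first by case=> ? [? [? [? ?]]]; apply: rho_gamma_shift.
split; first by case; apply: alpha_beta_sigma_sum.
split; first by case=> ? [? [? ?]]; apply: alpha_diff_eta.
split; first by case=> ? [? ?]; apply: beta_diff_eta.
by case=> ? [? [? [? ?]]]; apply: sigma_eta_shift.
Qed.
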